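(* Let $G=(V,E)$ be a $k$-cozy graph and let $U\subseteq V$ have fewer than $k$ spines in total. Then for every color $c\in\{1,\dots,k\}$, the number of spines of $U$ of color $c$ is even.
   Context: An undirected graph $G$ is $k$-cozy if it is connected, $k$-regular, and equipped with a $1$-factorization, i.e., an assignment of colors from $\{1,\dots,k\}$ to its edges such that the $k$ edges incident at each vertex receive distinct colors. For $U\subseteq V$, a spine of $U$ is an edge with exactly one endpoint in $U$. *)

From mathcomp Require Import all_boot.
Set Implicit Arguments. Unset Strict Implicit. Unset Printing Implicit Defensive.

Definition simple_graph (V : finType) (E : {set {set V}}) : Prop :=
  forall e, e \in E -> #|e| = 2.

Definition adj (V : finType) (E : {set {set V}}) : rel V :=
  fun x y => (x != y) && ([set x; y] \in E).

Definition graph_connected (V : finType) (E : {set {set V}}) : Prop :=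
  forall x y : V, connect (adj E) x y.

Definition incident (V : finType) (E : {set {set V}}) (x : V) : {set {set V}} :=
  [set e in E | x \in e].

Definition regular (V : finType) (E : {set {set V}}) (k : nat) : Prop :=
  forall x : V, #|incident E x| = k.

(* col : colours in 'I_k (i.e. {0,..,k-1}, standing for {1,..,k});
   the k edges at each vertex receive distinct colours. *)
Definition one_factorization (V : finType) (E : {set {set V}}) (k : nat)
  (col : {set V} -> 'I_k) : Prop :=
  forall x : V, {in incident E x &, injective col}.

Definition cozy (V : finType) (E : {set {set V}}) (k : nat)
  (col : {set V} -> 'I_k) : Prop :=
  [/\ simple_graph E, graph_connected E, regular E k & one_factorization E col].

Definition spines (V : finType) (E : {set {set V}}) (U : {set V}) : {set {set V}} :=
  [set e in E | #|e :&: U| == 1].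

(* Each colour class of a 1-factorization is a perfect matching, and counting
   the vertices of U along a perfect matching shows that |U| has the parity of
   the number of matching edges leaving U.  So all colours have the same parity
   of spines, namely that of |U|.  With fewer than k spines some colour has no
   spine at all, hence |U| is even, hence so is every colour's spine count. *)
From mathcomp Require Import all_boot.
Set Implicit Arguments. Unset Strict Implicit. Unset Printing Implicit Defensive.

Lemma odd_sum (I : finType) (A : {pred I}) (F : I -> nat) :
  odd (\sum_(i in A) F i) = odd #|[set i in A | odd (F i)]|.
Proof.
rewrite (eq_bigr _ (fun i _ => esym (odd_double_half (F i)))) big_split /=.
rewrite -(eq_bigr _ (fun i _ => mul2n _)) -big_distrr oddD oddM /= addbF.
congr odd; rewrite -sum1_card big_mkcond [RHS]big_mkcond.
by apply: eq_bigr => i _; rewrite inE; case: (i \in A); case: odd.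
Qed.

Section PerfectMatching.
Variables (V : finType) (M : {set {set V}}).
Hypothesis M_cover1 : forall x, #|incident M x| = 1.

Lemma sum_card_setI_cover1 (U : {set V}) : \sum_(e in M) #|e :&: U| = #|U|.
Proof.
have card_setI e : #|e :&: U| = \sum_(x in U | x \in e) 1.
  by rewrite -sum1_card; apply: eq_bigl => x; rewrite inE andbC.
rewrite (eq_bigr _ (fun e _ => card_setI e)) (exchange_big_dep (mem U)) /=;
  last by move=> e x _ /andP[].
rewrite -[RHS]sum1_card; apply: eq_bigr => x xU.
rewrite -[RHS](M_cover1 x) -sum1_card; apply: eq_bigl => e.
by rewrite !inE xU.
Qed.

Hypothesis M_pairs : forall e, e \in M -> #|e| = 2.

Lemma odd_card_cut (U : {set V}) :
  odd #|U| = odd #|[set e in M | #|e :&: U| == 1]|.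
Proof.
rewrite -sum_card_setI_cover1 odd_sum; congr odd; apply: eq_card => e.
rewrite !inE; case eM: (e \in M) => //=.
have : #|e :&: U| <= 2 by rewrite -(M_pairs eM) subset_leq_card ?subsetIl.
by case: #|e :&: U| => [|[|[|]]].
Qed.

End PerfectMatching.

Section ColourClasses.
Variables (V : finType) (E : {set {set V}}) (k : nat) (col : {set V} -> 'I_k).
Hypotheses (E_simple : simple_graph E) (E_regular : regular E k)
  (col_proper : one_factorization E col).

Definition colour_class (c : 'I_k) : {set {set V}} := [set e in E | col e == c].

Lemma col_incident_onto (x : V) : col @: incident E x = setT.
Proof.
apply/eqP; rewrite eqEcard subsetT cardsT card_ord.
by rewrite (card_in_imset (col_proper (x := x))) E_regular leqnn.
Qed.

Lemma card_incident_colour_class (x : V) (c : 'I_k) :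
  #|incident (colour_class c) x| = 1.
Proof.
have /imsetP[e ex ->] : c \in col @: incident E x by rewrite col_incident_onto inE.
apply/eqP/cards1P; exists e; apply/setP => f; rewrite !inE.
apply/idP/eqP => [/andP[/andP[fE /eqP colf] xf] | ->].
  by apply: (col_proper (x := x)); rewrite // inE fE.
by move: ex; rewrite inE => /andP[-> ->]; rewrite eqxx.
Qed.

Lemma spines_colourE (U : {set V}) (c : 'I_k) :
  [set e in spines E U | col e == c] = [set e in colour_class c | #|e :&: U| == 1].
Proof. by apply/setP => e; rewrite !inE andbAC. Qed.

Lemma odd_card_spines_colour (U : {set V}) (c : 'I_k) :
  odd #|[set e in spines E U | col e == c]| = odd #|U|.
Proof.
rewrite spines_colourE -(odd_card_cut (card_incident_colour_class ^~ c)) // => e.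
by rewrite inE => /andP[eE _]; exact: E_simple.
Qed.

End ColourClasses.

Theorem mainTheorem10 (V : finType) (E : {set {set V}}) (k : nat)
  (col : {set V} -> 'I_k) (U : {set V}) :
  cozy E col ->
  #|spines E U| < k ->
  forall c : 'I_k, ~~ odd #|[set e in spines E U | col e == c]|.
Proof.
case=> E_simple _ E_regular col_proper few_spines c.
have /subsetPn[c0 _ c0_missing] : ~~ ([set: 'I_k] \subset col @: spines E U).
  apply/negP => /subset_leq_card; rewrite cardsT card_ord leqNgt.
  by rewrite (leq_ltn_trans (leq_imset_card _ _) few_spines).
have no_c0_spine : [set e in spines E U | col e == c0] = set0.
  apply/setP => e; rewrite inE in_set0; apply/negP => /andP[eU /eqP col_e].
  by move: c0_missing; rewrite -col_e (imset_f _ eU).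
have odd_spines := odd_card_spines_colour E_simple E_regular col_proper U.
by rewrite odd_spines -(odd_spines c0) no_c0_spine cards0.
Qed.
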